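(* Let $n\ge3$. Then $\mathcal{PI}^{\ast}_n$ is generated as a semigroup by $\mathcal{S}_n\cup\{\gamma_{1,2},\gamma_{1,2}^{-1}\}$.
   Context: Let $X=\{1,\dots,n\}$, $X'=\{1',\dots,n'\}$. $\mathcal{PI}^{\ast}_n$ is the set of partitions of $X\cup X'$ each of whose blocks is a singleton (point) or a generalised line (a set meeting both $X$ and $X'$), with product $\star$: with $X''$ a third copy of $X$, regard $\alpha$ as a partition of $X\cup X''$ and $\beta$ as a partition of $X''\cup X'$, let $\sim$ be the equivalence on $X\cup X''\cup X'$ generated by the blocks of both; $\alpha\star\beta$ is the partition of $X\cup X'$ in which distinct $u,v$ are in one block iff $u\sim v$ and the $\sim$-class of $u$ contains no singleton block of $\alpha$ or $\beta$. $\mathcal{S}_n$ is the group of units (elements all of whose blocks are $\{x,\pi(x)'\}$, $\pi$ a permutation). $\gamma_{1,2}$ has blocks $\{1,2,1'\}$, $\{2'\}$ and $\{t,t'\}$ for $3\le t\le n$; $\gamma_{1,2}^{-1}$ has blocks $\{1,1',2'\}$, $\{2\}$ and $\{t,t'\}$ for $3\le t\le n$. *)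

From mathcomp Require Import all_boot fingroup perm.
Set Implicit Arguments. Unset Strict Implicit. Unset Printing Implicit Defensive.

(* Ground set X ∪ X' : inl x = x ∈ X, inr x = x' ∈ X' (points 1..n are 'I_n, 0-based). *)
Definition pt (n : nat) := ('I_n + 'I_n)%type.

Definition PIpart (n : nat) := {set {set pt n}}.

Definition isPIstar (n : nat) (a : PIpart n) : Prop :=
  partition a [set: pt n] /\
  forall B, B \in a ->
    #|B| = 1 \/ ((exists x : 'I_n, inl x \in B) /\ (exists y : 'I_n, inr y \in B)).

(* Three copies X (level 0), X'' (level 1), X' (level 2). *)
Definition pt3 (n : nat) := ('I_n * 'I_3)%type.
Definition lev0 : 'I_3 := @Ordinal 3 0 isT.
Definition lev1 : 'I_3 := @Ordinal 3 1 isT.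
Definition lev2 : 'I_3 := @Ordinal 3 2 isT.

(* alpha is regarded as a partition of X ∪ X'' *)
Definition embL n (u : pt n) : pt3 n :=
  match u with inl x => (x, lev0) | inr x => (x, lev1) end.
(* beta is regarded as a partition of X'' ∪ X' *)
Definition embR n (u : pt n) : pt3 n :=
  match u with inl x => (x, lev1) | inr x => (x, lev2) end.
(* the outer X ∪ X' of the product *)
Definition embO n (u : pt n) : pt3 n :=
  match u with inl x => (x, lev0) | inr x => (x, lev2) end.

Definition edge n (a b : PIpart n) : rel (pt3 n) := fun w z =>
  [exists B in a, (w \in (@embL n) @: B) && (z \in (@embL n) @: B)] ||
  [exists B in b, (w \in (@embR n) @: B) && (z \in (@embR n) @: B)].

Definition sim n (a b : PIpart n) : rel (pt3 n) := connect (edge a b).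

Definition badclass n (a b : PIpart n) (w : pt3 n) : bool :=
  [exists B in a, (#|B| == 1) && [exists v in B, sim a b w (embL v)]] ||
  [exists B in b, (#|B| == 1) && [exists v in B, sim a b w (embR v)]].

Definition starR n (a b : PIpart n) (u v : pt n) : bool :=
  (u == v) || (sim a b (embO u) (embO v) && ~~ badclass a b (embO u)).

Definition star n (a b : PIpart n) : PIpart n :=
  [set [set v | starR a b u v] | u : pt n].

Definition unitS n (s : {perm 'I_n}) : PIpart n :=
  [set [set (inl x : pt n); inr (s x)] | x : 'I_n].

(* gamma_{1,2}: blocks {1,2,1'}, {2'}, {t,t'} (t >= 3); 0-based indices *)
Definition gblock n (u : pt n) : bool :=
  match u with inl x => (x < 2)%N | inr x => (x == 0 :> nat) end.
Definition gamma12 n : PIpart n :=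
  [set [set u | gblock u]] :|:
  [set [set (inr x : pt n)] | x : 'I_n & (x == 1 :> nat)] :|:
  [set [set (inl t : pt n); inr t] | t : 'I_n & (2 <= t)%N].

(* gamma_{1,2}^{-1}: blocks {1,1',2'}, {2}, {t,t'} (t >= 3) *)
Definition gblockinv n (u : pt n) : bool :=
  match u with inl x => (x == 0 :> nat) | inr x => (x < 2)%N end.
Definition gamma12inv n : PIpart n :=
  [set [set u | gblockinv u]] :|:
  [set [set (inl x : pt n)] | x : 'I_n & (x == 1 :> nat)] :|:
  [set [set (inl t : pt n); inr t] | t : 'I_n & (2 <= t)%N].

Definition gens n (a : PIpart n) : Prop :=
  (exists s : {perm 'I_n}, a = unitS s) \/ a = gamma12 n \/ a = gamma12inv n.

Inductive gen n (G : PIpart n -> Prop) : PIpart n -> Prop :=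
| gen_base a : G a -> gen G a
| gen_mul a b : gen G a -> gen G b -> gen G (star a b).

(* Closure: in a product of elements of PI*_n, a ~-class containing no
   singleton block of either factor reaches both X and X', since every block
   it passes through is a line; so each block of the product is a point or a
   line.

   Generation: write gamma_{p,q} for the element with blocks {p, q, p'}, {q'}
   and {t, t'}, a conjugate of gamma_{1,2} by a unit, and a* for the image of
   a under the anti-involution exchanging X and X' (gamma_{1,2}* is
   gamma_{1,2}^-1).  If two points p <> q of X share a block of a, then
   a = gamma_{p,q} a' where a' is a with q split off as a point, and a' has
   fewer points outside singleton blocks; two points of X' in one block are
   handled through a*.  Otherwise a is a partial injection f : X -> X'.  If f
   is undefined at p <> q, then a = gamma_{p,q} a'' where a'' extends f by
   sending q to a point outside its image.  If f is undefined at exactly one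
   point and y' is the point of X' outside its image, then
   a = s gamma_{p,y}* gamma_{p,y} for a unit s, because gamma_{p,y}* gamma_{p,y}
   is the identity with y and y' split off.  If f is total, a is a unit. *)

From mathcomp Require Import all_boot fingroup perm zify.
Set Implicit Arguments. Unset Strict Implicit. Unset Printing Implicit Defensive.

Section EquivalenceRel.
Variables (T : Type) (r : rel T).
Hypothesis eqr : equivalence_rel r.

Lemma eqv_refl x : r x x.
Proof. by case: (eqr x x x). Qed.

Lemma eqv_sym x y : r x y -> r y x.
Proof. by move=> rxy; case: (eqr x y x) => rxx /(_ rxy) <-. Qed.

Lemma eqv_trans x y z : r x y -> r y z -> r x z.
Proof. by move=> rxy; case: (eqr x y z) => _ /(_ rxy) ->. Qed.

Lemma eqv_symE x y : r x y = r y x.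
Proof. by apply/idP/idP; apply: eqv_sym. Qed.

Lemma eqv_congr x x' y y' : r x x' -> r y y' -> r x' y' = r x y.
Proof.
move=> xx' yy'; case: (eqr x x' y') => _ <- //.
by rewrite eqv_symE; case: (eqr y y' x) => _ <- //; rewrite eqv_symE.
Qed.

Lemma relpre_equiv (S : Type) (f : S -> T) : equivalence_rel (relpre f r).
Proof. by move=> x y z /=; split; [apply: eqv_refl | case: (eqr (f x) (f y) (f z))]. Qed.

End EquivalenceRel.

Lemma eq_op_equiv (T : eqType) : equivalence_rel (@eq_op T).
Proof. by move=> x y z; split=> // /eqP ->. Qed.

Lemma connect_homo (T U : finType) (e : rel T) (e' : rel U) (f : T -> U) :
  {homo f : x y / e x y >-> e' x y} ->
  forall x y, connect e x y -> connect e' (f x) (f y).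
Proof.
move=> fe x y /connectP [p ep ->]; apply/connectP.
by exists (map f p); [exact: homo_path ep | rewrite last_map].
Qed.

Lemma existsb_imset (A B : finType) (f : A -> B) (D : {set A}) (P : pred B) :
  [exists y in f @: D, P y] = [exists x in D, P (f x)].
Proof.
apply/existsP/existsP => [[_ /andP [/imsetP [x Dx ->] Pfx]] | [x /andP [Dx Pfx]]].
  by exists x; rewrite Dx.
by exists (f x); rewrite imset_f.
Qed.

Lemma perm2_exists (T : finType) (p q i j : T) : p != q -> i != j ->
  exists s : {perm T}, s p = i /\ s q = j.
Proof.
move=> pq ij; exists (tperm p i * tperm (tperm p i q) j)%g.
rewrite !permM tpermL; split; last by rewrite tpermL.
have qi : tperm p i q != i.
  apply: contra pq => /eqP E; apply/eqP.
  by apply: (@perm_inj _ (tperm p i)); rewrite E tpermL.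
by rewrite (@tpermD _ (tperm p i q) j i) // eq_sym.
Qed.

Lemma lev_cases (l : 'I_3) : [\/ l = lev0, l = lev1 | l = lev2].
Proof.
by case: l => -[|[|[|//]]] l3; [constructor 1 | constructor 2 | constructor 3]; apply: val_inj.
Qed.

Notation labelrel k := (relpre k eq_op).

(** * Partitions as equivalence relations *)

Section RelPartition.
Variable n : nat.
Local Notation T := (pt n).
Implicit Types (r : rel T) (a : PIpart n) (u v : T).

Definition rel_part r : PIpart n := [set [set v | r u v] | u : T].

Definition isolated r u : bool := [forall v, r u v ==> (v == u)].

Definition PIstar_rel r : Prop :=
  forall u, isolated r u || ([exists x, r u (inl x)] && [exists y, r u (inr y)]).

Lemma labelrel_equiv (L : eqType) (k : T -> L) : equivalence_rel (labelrel k).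
Proof. exact/relpre_equiv/eq_op_equiv. Qed.

Lemma isolatedP r u v : isolated r u -> r u v -> v = u.
Proof. by move=> /forallP /(_ v) /implyP ruv /ruv /eqP. Qed.

Lemma isolatedPn r u v : r u v -> v != u -> ~~ isolated r u.
Proof. by move=> ruv; apply: contra => iu; rewrite (isolatedP iu ruv). Qed.

Lemma card_class1 r u : equivalence_rel r -> (#|[set v | r u v]| == 1) = isolated r u.
Proof.
move=> eqr; apply/cards1P/forallP => [[u0 E] v | iu].
  apply/implyP => ruv.
  have : v \in [set v | r u v] by rewrite inE.
  have : u \in [set v | r u v] by rewrite inE eqv_refl.
  by rewrite E !inE => /eqP -> /eqP ->.
exists u; apply/setP => v; rewrite !inE.
apply/idP/eqP => [ruv | ->]; last exact: eqv_refl.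
by have /implyP /(_ ruv) /eqP := iu v.
Qed.

Lemma rel_partE r : rel_part r = equivalence_partition r [set: T].
Proof.
by apply/setP => B; apply/imsetP/imsetP => -[u _ ->]; exists u => //;
  apply/setP => v; rewrite !inE.
Qed.

Lemma rel_class_eq r u v : equivalence_rel r -> r u v -> [set w | r u w] = [set w | r v w].
Proof. by move=> eqr uv; apply/setP => w; rewrite !inE; case: (eqr u v w) => _ ->. Qed.

Lemma rel_part_ext r r' : r =2 r' -> rel_part r = rel_part r'.
Proof.
move=> E; apply/setP => B; apply/imsetP/imsetP => -[u _ ->]; exists u => //;
  by apply/setP => v; rewrite !inE E.
Qed.

Lemma isPIstar_rel_part r : equivalence_rel r -> PIstar_rel r -> isPIstar (rel_part r).
Proof.
move=> eqr PIr; split.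
  by rewrite rel_partE; apply: equivalence_partitionP => x y z _ _ _; exact: eqr.
move=> B /imsetP [u _ ->].
case/orP: (PIr u) => [iu | /andP [/existsP [x rux] /existsP [y ruy]]].
  by left; apply/eqP; rewrite card_class1.
by right; split; [exists x | exists y]; rewrite inE.
Qed.

Lemma eq_orb_nonisolatedE r u v u' v' : equivalence_rel r ->
    (u = v -> u' = v') -> (isolated r u' -> r u' v' -> u = v) ->
  (u == v) || (r u' v' && ~~ isolated r u') = r u' v'.
Proof.
move=> eqr uv iso; case: (eqVneq u v) => [/uv -> | neq] /=; first by rewrite eqv_refl.
by case r': (r u' v'); rewrite //=; apply/negP => /iso /(_ r') /eqP; rewrite (negbTE neq).
Qed.

Definition inpblock a : rel T := fun u v => v \in pblock a u.

Lemma isPIstarP a : isPIstar a ->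
  [/\ a = rel_part (inpblock a), equivalence_rel (inpblock a) & PIstar_rel (inpblock a)].
Proof.
case=> Pa lines.
have eqa : equivalence_rel (inpblock a).
  by move=> x y z; apply: (pblock_equivalence Pa); rewrite inE.
split => //; first by rewrite rel_partE -{1}(equivalence_partition_pblock Pa).
move=> u; have Pu : pblock a u \in a.
  by apply: pblock_mem; rewrite (cover_partition Pa) inE.
have E : pblock a u = [set v | inpblock a u v] by apply/setP => v; rewrite inE.
case: (lines _ Pu) => [C | [[x ux] [y uy]]]; first by rewrite -card_class1 // -E C.
by apply/orP; right; apply/andP; split; apply/existsP; [exists x | exists y].
Qed.

End RelPartition.

(** * The product and the closure of PI*_n *)

Section Sim.
Variable n : nat.
Local Notation T := (pt n).
Local Notation T3 := (pt3 n).
Implicit Types (a b : PIpart n).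

Lemma edge_sym a b : symmetric (edge a b).
Proof.
move=> w z; congr orb; apply/existsP/existsP => -[B /andP [aB /andP [wB zB]]];
  by exists B; rewrite aB wB zB.
Qed.

Lemma sim_refl a b w : sim a b w w.
Proof. exact: connect0. Qed.

Lemma sim_sym a b w z : sim a b w z = sim a b z w.
Proof. exact: (sym_connect_sym (@edge_sym a b)). Qed.

Lemma sim_trans a b w y z : sim a b w y -> sim a b y z -> sim a b w z.
Proof. exact: connect_trans. Qed.

Lemma badclass_sim a b w z : sim a b w z -> badclass a b w = badclass a b z.
Proof.
move=> wz; have E y : sim a b w y = sim a b z y.
  apply/idP/idP; last exact: sim_trans.
  by apply: sim_trans; rewrite sim_sym.
by rewrite /badclass; congr orb; apply: eq_existsb => B; do 2 congr andb;
  apply: eq_existsb => v; rewrite E.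
Qed.

Lemma starR_equiv a b : equivalence_rel (starR a b).
Proof.
move=> x y z; rewrite /starR eqxx; split=> //.
case/orP => [/eqP -> // | /andP [xy bx]].
have -> : sim a b (embO x) (embO z) = sim a b (embO y) (embO z).
  apply/idP/idP => [|yz]; last exact: sim_trans xy yz.
  by apply: sim_trans; rewrite sim_sym.
rewrite -(badclass_sim xy) (negbTE bx) !andbT.
case: (eqVneq x z) => [<- | _] /=; first by rewrite [sim _ _ (embO y) _]sim_sym xy orbT.
by case: (eqVneq y z) => [<- | _] //=; exact: sim_refl.
Qed.

Section RelFactors.
Variables Ra Rb : rel T.
Hypotheses (eqRa : equivalence_rel Ra) (eqRb : equivalence_rel Rb).
Local Notation a := (rel_part Ra).
Local Notation b := (rel_part Rb).

Lemma edge_rel_part w z : edge a b w z ->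
  (exists u v, [/\ w = embL u, z = embL v & Ra u v]) \/
  (exists u v, [/\ w = embR u, z = embR v & Rb u v]).
Proof.
case/orP => /existsP [_ /andP [/imsetP [u0 _ ->] /andP [/imsetP [u] /[!inE] u0u ->]]]
  => /imsetP [v] /[!inE] u0v ->.
  by left; exists u, v; split => //; apply: eqv_trans (eqv_sym eqRa u0u) u0v.
by right; exists u, v; split => //; apply: eqv_trans (eqv_sym eqRb u0u) u0v.
Qed.

Lemma simL u v : Ra u v -> sim a b (embL u) (embL v).
Proof.
move=> uv; apply/connect1/orP; left; apply/existsP; exists [set x | Ra u x].
by rewrite imset_f //= !imset_f // inE ?(eqv_refl eqRa).
Qed.

Lemma simR u v : Rb u v -> sim a b (embR u) (embR v).
Proof.
move=> uv; apply/connect1/orP; right; apply/existsP; exists [set x | Rb u x].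
by rewrite imset_f //= !imset_f // inE ?(eqv_refl eqRb).
Qed.

Lemma exists_isolated_block (R : rel T) (P : pred T) : equivalence_rel R ->
  [exists B in rel_part R, (#|B| == 1) && [exists v in B, P v]] =
  [exists v, isolated R v && P v].
Proof.
move=> eqR; apply/existsP/existsP => [[_ /andP [/imsetP [u _ ->]]] | [v /andP [iv Pv]]].
  case/andP; rewrite card_class1 // => iu /existsP [v] /andP [/[!inE] uv Pv].
  by rewrite (isolatedP iu uv) in Pv; exists u; rewrite iu.
exists [set x | R v x]; rewrite imset_f //= card_class1 // iv.
by apply/existsP; exists v; rewrite inE eqv_refl.
Qed.

Lemma badclassE w : badclass a b w =
  [exists v, isolated Ra v && sim a b w (embL v)] ||
  [exists v, isolated Rb v && sim a b w (embR v)].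
Proof. by rewrite /badclass !exists_isolated_block. Qed.

Lemma sim_char (L : Type) (Q : rel L) (lab : T3 -> L) (rep : T3 -> T3) :
  equivalence_rel Q ->
  (forall u v, Ra u v -> Q (lab (embL u)) (lab (embL v))) ->
  (forall u v, Rb u v -> Q (lab (embR u)) (lab (embR v))) ->
  (forall w, sim a b w (rep w)) ->
  (forall w z, Q (lab w) (lab z) -> sim a b (rep w) (rep z)) ->
  forall w z, sim a b w z = Q (lab w) (lab z).
Proof.
move=> eqQ QL QR wrep Qrep w z; apply/idP/idP => [|/Qrep]; last first.
  by move=> rwz; apply: sim_trans (wrep w) _; apply: sim_trans rwz _; rewrite sim_sym.
case/connectP => p; elim: p w => [|y p IH] w /=; first by move=> _ ->; apply: eqv_refl.
case/andP => /edge_rel_part wy yp zp; apply: (eqv_trans eqQ _ (IH _ yp zp)).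
by case: wy => -[u [v [-> -> uv]]]; [apply: QL | apply: QR].
Qed.

Lemma starR_PIstar : PIstar_rel Ra -> PIstar_rel Rb -> PIstar_rel (starR a b).
Proof.
move=> PIa PIb u; case bu: (badclass a b (embO u)).
  apply/orP; left; apply/forallP => v; apply/implyP.
  by rewrite /starR bu andbF orbF eq_sym.
have line v : sim a b (embO u) (embO v) -> starR a b u v.
  by move=> uv; rewrite /starR uv bu orbT.
apply/orP; right; move: bu; rewrite badclassE => /norP [nisoL nisoR].
case: u line nisoL nisoR => [x|z] line nisoL nisoR.
- have [y xy] : exists y, Ra (inl x) (inr y).
    case/orP: (PIa (inl x)) => [ix | /andP [_ /existsP //]].
    by case/negP: nisoL; apply/existsP; exists (inl x); rewrite ix sim_refl.
  have xy' : sim a b (embO (inl x)) (embR (inl y)) by apply: (simL xy).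
  have [z yz] : exists z, Rb (inl y) (inr z).
    case/orP: (PIb (inl y)) => [iy | /andP [_ /existsP //]].
    by case/negP: nisoR; apply/existsP; exists (inl y); rewrite iy xy'.
  apply/andP; split; apply/existsP; first by exists x; rewrite /starR eqxx.
  by exists z; apply/line/(sim_trans xy'); exact: (simR yz).
- have [y zy] : exists y, Rb (inr z) (inl y).
    case/orP: (PIb (inr z)) => [iz | /andP [/existsP // _]].
    by case/negP: nisoR; apply/existsP; exists (inr z); rewrite iz sim_refl.
  have zy' : sim a b (embO (inr z)) (embL (inr y)) by apply: (simR zy).
  have [x yx] : exists x, Ra (inr y) (inl x).
    case/orP: (PIa (inr y)) => [iy | /andP [/existsP // _]].
    by case/negP: nisoL; apply/existsP; exists (inr y); rewrite iy zy'.
  apply/andP; split; apply/existsP; last by exists z; rewrite /starR eqxx.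
  by exists x; apply/line/(sim_trans zy'); exact: (simL yx).
Qed.

End RelFactors.

Lemma star_PIstar a b : isPIstar a -> isPIstar b -> isPIstar (star a b).
Proof.
case/isPIstarP => Ea eqa PIa; case/isPIstarP => Eb eqb PIb; rewrite Ea Eb.
apply: isPIstar_rel_part; [exact: starR_equiv | exact: starR_PIstar].
Qed.

End Sim.

(** * The anti-involution exchanging X and X' *)

Section Flip.
Variable n : nat.
Local Notation T := (pt n).
Local Notation T3 := (pt3 n).
Implicit Types (a b : PIpart n) (r : rel T).

Definition flipT (u : T) : T := match u with inl x => inr x | inr x => inl x end.
Definition flip a : PIpart n := [set flipT @: (B : {set T}) | B in a].
(* Reversing the levels X, X'', X' of the product exchanges the roles of its
   two factors, so [flip] reverses products. *)
Definition rev3 (w : T3) : T3 := (w.1, rev_ord w.2).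

Lemma flipTK : involutive flipT. Proof. by case. Qed.
Lemma flipT_inj : injective flipT. Proof. exact: inv_inj flipTK. Qed.
Lemma rev3K : involutive rev3. Proof. by case=> x l; rewrite /rev3 /= rev_ordK. Qed.
Lemma rev3_inj : injective rev3. Proof. exact: inv_inj rev3K. Qed.

Lemma mem_imset_flipT (A : {set T}) u : (u \in flipT @: A) = (flipT u \in A).
Proof. by rewrite -{1}(flipTK u) mem_imset //; exact: flipT_inj. Qed.

Lemma embL_flip u : embL (flipT u) = rev3 (embR u).
Proof. by case: u => x; congr pair; apply: val_inj. Qed.

Lemma embR_flip u : embR (flipT u) = rev3 (embL u).
Proof. by case: u => x; congr pair; apply: val_inj. Qed.

Lemma embO_flip u : embO (flipT u) = rev3 (embO u).
Proof. by case: u => x; congr pair; apply: val_inj. Qed.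

Lemma edge_flip a b w z : edge (flip b) (flip a) (rev3 w) (rev3 z) = edge a b w z.
Proof.
have mem_flip (emb emb' : T -> T3) (B : {set T}) : emb \o flipT =1 rev3 \o emb' ->
    forall y, (rev3 y \in emb @: (flipT @: B)) = (y \in emb' @: B).
  by move=> E y; rewrite -imset_comp (eq_imset _ E) imset_comp mem_imset //; exact: rev3_inj.
rewrite /edge orbC !existsb_imset; congr orb; apply: eq_existsb => B;
  by rewrite ?(mem_flip _ _ _ embR_flip) ?(mem_flip _ _ _ embL_flip).
Qed.

Lemma sim_flip a b w z : sim (flip b) (flip a) (rev3 w) (rev3 z) = sim a b w z.
Proof.
apply/idP/idP => [|]; last by apply: connect_homo => x y; rewrite edge_flip.
move=> sim_wz; rewrite -(rev3K w) -(rev3K z); move: sim_wz.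
by apply: connect_homo => x y; rewrite -[edge a b _ _]edge_flip !rev3K.
Qed.

Lemma badclass_flip a b w : badclass (flip b) (flip a) (rev3 w) = badclass a b w.
Proof.
rewrite /badclass orbC !existsb_imset; congr orb; apply: eq_existsb_in => B _;
  rewrite card_imset ?existsb_imset; try exact: flipT_inj; congr andb;
  by apply: eq_existsb => v; rewrite ?embL_flip ?embR_flip sim_flip.
Qed.

Lemma starR_flip a b u v : starR (flip b) (flip a) (flipT u) (flipT v) = starR a b u v.
Proof. by rewrite /starR (inj_eq flipT_inj) !embO_flip sim_flip badclass_flip. Qed.

Lemma flip_star a b : flip (star a b) = star (flip b) (flip a).
Proof.
apply/setP => B; apply/imsetP/imsetP => [[_ /imsetP [u _ ->] ->] | [u _ ->]].
  exists (flipT u) => //; apply/setP => v.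
  by rewrite mem_imset_flipT !inE -[starR a b _ _]starR_flip flipTK.
exists [set v | starR a b (flipT u) v]; first exact: imset_f.
by apply/setP => v; rewrite mem_imset_flipT !inE -[starR a b _ _]starR_flip !flipTK.
Qed.

Lemma flip_rel_part r : flip (rel_part r) = rel_part (relpre flipT r).
Proof.
apply/setP => B; apply/imsetP/imsetP => [[_ /imsetP [u _ ->] ->] | [u _ ->]].
  by exists (flipT u) => //; apply/setP => v; rewrite mem_imset_flipT !inE /= flipTK.
exists [set v | r (flipT u) v]; first exact: imset_f.
by apply/setP => v; rewrite mem_imset_flipT !inE.
Qed.

Lemma flipK : involutive flip.
Proof.
have flipTTK (B : {set T}) : flipT @: (flipT @: B) = B.
  by rewrite -imset_comp (eq_imset _ flipTK) imset_id.
by move=> a; rewrite /flip -imset_comp (eq_imset _ flipTTK) imset_id.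
Qed.

Lemma isolated_flip r u : isolated (relpre flipT r) u = isolated r (flipT u).
Proof.
apply/forallP/forallP => iu v; move: (iu (flipT v)); rewrite /= ?flipTK.
  by rewrite -(inj_eq flipT_inj) flipTK.
by rewrite (inj_eq flipT_inj).
Qed.

Lemma PIstar_rel_flip r : PIstar_rel r -> PIstar_rel (relpre flipT r).
Proof. by move=> PIr u; rewrite isolated_flip andbC; exact: PIr (flipT u). Qed.

Lemma isPIstar_flip a : isPIstar a -> isPIstar (flip a).
Proof.
case/isPIstarP => Ea eqa PIa; rewrite Ea flip_rel_part.
by apply: isPIstar_rel_part; [exact: relpre_equiv | exact: PIstar_rel_flip].
Qed.

Lemma flip_unitS (s : {perm 'I_n}) : flip (unitS s) = unitS s^-1%g.
Proof.
rewrite /flip /unitS -imset_comp; apply/setP => B; apply/imsetP/imsetP => -[x _ ->].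
  by exists (s x) => //=; rewrite imsetU1 imset_set1 /= permK setUC.
by exists (s^-1%g x) => //=; rewrite imsetU1 imset_set1 /= permKV setUC.
Qed.

Lemma flip_gamma12 : flip (gamma12 n) = gamma12inv n.
Proof.
rewrite /flip /gamma12 /gamma12inv !imsetU imset_set1 -!imset_comp.
congr (_ :|: _ :|: _).
- by congr [set _]; apply/setP => u; rewrite mem_imset_flipT !inE; case: u.
- by apply: eq_imset => x; rewrite /= imset_set1.
- by apply: eq_imset => x; rewrite /= imsetU1 imset_set1 setUC.
Qed.

Lemma gen_flip a : gen (@gens n) a -> gen (@gens n) (flip a).
Proof.
elim=> [{}a gens_a | b c _ gen_b _ gen_c]; last by rewrite flip_star; exact: gen_mul.
apply: gen_base; case: gens_a => [[s ->] | [-> | ->]].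
- by left; exists s^-1%g; exact: flip_unitS.
- by right; right; exact: flip_gamma12.
- by right; left; rewrite -flip_gamma12 flipK.
Qed.

End Flip.

Arguments flipT {n}.

(** * Products by units and by the elements gamma_{p,q} *)

Section FunctionalFactor.
Variable n : nat.
Local Notation T := (pt n).
Local Notation T3 := (pt3 n).

Definition lmap (h : 'I_n -> 'I_n) (u : T) : T :=
  match u with inl x => inl (h x) | inr y => inr y end.

Lemma lmap_inj h : injective h -> injective (lmap h).
Proof. by move=> injh [x|y] [x'|y'] //= [E]; rewrite ?(injh _ _ E) ?E. Qed.

Variables (Ra Rb : rel T) (h : 'I_n -> 'I_n).
Hypotheses (eqRa : equivalence_rel Ra) (eqRb : equivalence_rel Rb).
Hypothesis Ra_lr : forall x, Ra (inl x) (inr (h x)).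
Hypothesis Ra_rr : forall y y', Ra (inr y) (inr y') -> y = y'.
Local Notation a := (rel_part Ra).
Local Notation b := (rel_part Rb).

(* So ~ only attaches x to (h x)'' and otherwise
   agrees with the blocks of [b] on X'' and X'; [proj] sends each point to a
   point of its class in X'' or X', read in the ground set of [b]. *)
Let proj (w : T3) : T :=
  if w.2 == lev0 then inl (h w.1) else if w.2 == lev1 then inl w.1 else inr w.1.

Lemma proj_embR u : proj (embR u) = u. Proof. by case: u. Qed.

Lemma proj_embO u : proj (embO u) = lmap h u. Proof. by case: u. Qed.

Lemma sim_functional w z : sim a b w z = Rb (proj w) (proj z).
Proof.
pose m u := match u with inl x => h x | inr y => y end.
have Ra_m u : Ra u (inr (m u)) by case: u => [x|y] /=; [apply: Ra_lr | apply: eqv_refl].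
have proj_embL u : proj (embL u) = inl (m u) by case: u.
apply: (@sim_char _ _ _ eqRa eqRb _ Rb proj (fun w => embR (proj w)))
  => // [u v uv | u v uv | [x l] | w1 z1].
- rewrite !proj_embL (Ra_rr (eqv_trans eqRa (eqv_sym eqRa (Ra_m u)) (eqv_trans eqRa uv (Ra_m v)))).
  exact: eqv_refl.
- by rewrite !proj_embR.
- case: (lev_cases l) => -> /=; rewrite /proj /=; try exact: sim_refl.
  exact: (simL Rb eqRa (Ra_lr x)).
- by move=> Rwz; apply: simR.
Qed.

Lemma starR_functional u v : starR a b u v = (u == v) ||
  (Rb (lmap h u) (lmap h v) &&
   ~~ ([exists y, isolated Ra (inr y) && Rb (lmap h u) (inl y)] || isolated Rb (lmap h u))).
Proof.
rewrite /starR sim_functional !proj_embO badclassE //; congr (_ || (_ && ~~ _)); congr orb.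
- apply/existsP/existsP => [[[x|y] /andP [iso uy]] | [y /andP [iso uy]]].
  + by have := isolatedP iso (Ra_lr x).
  + by exists y; rewrite iso; rewrite sim_functional proj_embO in uy.
  + by exists (inr y); rewrite iso sim_functional proj_embO.
- apply/existsP/idP => [[w /andP [iso]] | iso]; last first.
    by exists (lmap h u); rewrite iso sim_functional proj_embO proj_embR eqv_refl.
  rewrite sim_functional proj_embO proj_embR => /(eqv_sym eqRb) /(isolatedP iso) ->.
  exact: iso.
Qed.

End FunctionalFactor.

Section PartialInjections.
Variable n : nat.
Local Notation T := (pt n).
Implicit Types (f g : 'I_n -> option 'I_n).

Definition pinj_rel f : rel T := fun u v =>
  match u, v with
  | inl x, inl x' => x == x'
  | inr y, inr y' => y == y'
  | inl x, inr y | inr y, inl x => f x == Some y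
  end.

Definition pinjective f : Prop := forall x x' y, f x = Some y -> f x' = Some y -> x = x'.

Lemma pinj_rel_equiv f : pinjective f -> equivalence_rel (pinj_rel f).
Proof.
move=> injf [x|y] [x'|y'] [x''|y''] /=; split=> //; try by move/eqP ->.
- move/eqP=> fx; apply/eqP/eqP => [<- // | fx''].
  exact: injf fx fx''.
- move/eqP=> fx; apply/eqP/eqP => [fx'' | <- //].
  exact: injf fx fx''.
Qed.

Lemma eq_pinj_rel f g : f =1 g -> pinj_rel f =2 pinj_rel g.
Proof. by move=> fg [x|y] [x'|y'] /=; rewrite ?fg. Qed.

Lemma isolated_pinj_inl f x : isolated (pinj_rel f) (inl x) = (f x == None).
Proof.
apply/idP/eqP => [iso | fx].
  case E: (f x) => [y|] //; suff: inr y = inl x :> T by [].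
  by apply: (isolatedP iso); rewrite /= E.
by apply/forallP => -[x'|y'] /=; [apply/implyP => /eqP -> | rewrite fx].
Qed.

Lemma isolated_pinj_inr f y : isolated (pinj_rel f) (inr y) = [forall x, f x != Some y].
Proof.
apply/idP/forallP => [iso x | fy].
  apply/eqP => fx; suff: inl x = inr y :> T by [].
  by apply: (isolatedP iso); rewrite /= fx.
apply/forallP => -[x|y'] /=; apply/implyP; last by move/eqP ->.
by move=> fx; have := fy x; rewrite fx.
Qed.

Lemma pinj_rel_lmap (s : 'I_n -> 'I_n) f : injective s ->
  relpre (lmap s) (pinj_rel f) =2 pinj_rel (f \o s).
Proof. by move=> injs [x|y] [x'|y'] //=; rewrite (inj_eq injs). Qed.

Lemma pinjective_perm (s : {perm 'I_n}) : pinjective (Some \o s).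
Proof. by move=> x x' y /= [<-] [/perm_inj]. Qed.

Lemma unitS_pinj (s : {perm 'I_n}) : unitS s = rel_part (pinj_rel (Some \o s)).
Proof.
have cls x : [set v | pinj_rel (Some \o s) (inl x) v] = [set inl x; inr (s x)].
  by apply/setP => -[x'|y']; rewrite !inE /= ?orbF // eq_sym.
apply/setP => B; apply/imsetP/imsetP => -[u _ ->]; first by exists (inl u); rewrite ?cls.
case: u => [x|y]; first by exists x; rewrite ?cls.
exists (s^-1%g y) => //; rewrite -cls.
by apply: rel_class_eq (pinj_rel_equiv (pinjective_perm (s := s))) _; rewrite /= permKV.
Qed.

Lemma isPIstar_unitS (s : {perm 'I_n}) : isPIstar (unitS s).
Proof.
rewrite unitS_pinj; apply: isPIstar_rel_part.
  exact: (pinj_rel_equiv (pinjective_perm (s := s))).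
move=> [x|y]; apply/orP; right; apply/andP; split; apply/existsP => /=.
- by exists x.
- by exists (s x).
- by exists (s^-1%g y); rewrite /= permKV.
- by exists y.
Qed.

Lemma star_unitS (s : {perm 'I_n}) (r : rel T) : equivalence_rel r ->
  star (unitS s) (rel_part r) = rel_part (relpre (lmap s) r).
Proof.
move=> eqr; rewrite unitS_pinj; apply: rel_part_ext => u v.
have eqS := pinj_rel_equiv (pinjective_perm (s := s)).
rewrite (starR_functional eqS eqr (h := s)) //=; last by move=> y y' /eqP.
have -> : [exists y, isolated (pinj_rel (Some \o s)) (inr y) && r (lmap s u) (inl y)] = false.
  apply/existsP => -[y /andP []]; rewrite isolated_pinj_inr => /forallP /(_ (s^-1%g y)).
  by rewrite /= permKV eqxx.
apply: eq_orb_nonisolatedE => // [-> // | iso ruv].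
exact/(lmap_inj perm_inj)/esym/(isolatedP iso).
Qed.

Definition holes f : {set 'I_n} := [set x | f x == None].

Lemma pinj_not_onto f x0 : pinjective f -> f x0 = None -> exists y0, forall x, f x != Some y0.
Proof.
move=> injf fx0; case: (pickP (fun y => [forall x, f x != Some y])) => [y0 /forallP | none].
  by exists y0.
have hit y : exists x, f x = Some y.
  by move: (none y) => /negbT /forallPn [x /negPn /eqP]; exists x.
pose g y := odflt x0 [pick x | f x == Some y].
have fg y : f (g y) = Some y.
  rewrite /g; case: pickP => [x /eqP // | nx].
  by have [x fx] := hit y; move: (nx x); rewrite fx eqxx.
have g_inj : injective g by move=> y y' gyy'; apply: Some_inj; rewrite -fg gyy' fg.
have /codomP [y gy] := injF_onto g_inj x0.
by move: (fg y); rewrite -gy fx0.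
Qed.

End PartialInjections.

Section Gam.
Variable n : nat.
Local Notation T := (pt n).

Definition fuse (p q x : 'I_n) : 'I_n := if x == q then p else x.

Definition gam_label (p q : 'I_n) (u : T) : 'I_n :=
  match u with inl x => fuse p q x | inr y => y end.

(* gamma_{p,q}, with blocks {p, q, p'}, {q'} and {t, t'}; gamma_{1,2} is
   [gam 0 1] in 0-based indices. *)
Definition gam (p q : 'I_n) : PIpart n := rel_part (labelrel (gam_label p q)).

(* The outer [flip] turns left multiplication by [unitS s] into right
   multiplication by its inverse. *)
Lemma gam_conj (s : {perm 'I_n}) p q :
  flip (star (unitS s) (flip (star (unitS s) (gam (s p) (s q))))) = gam p q.
Proof.
rewrite /gam star_unitS; last exact: labelrel_equiv.
rewrite [X in star _ X]flip_rel_part star_unitS; last exact/relpre_equiv/labelrel_equiv.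
rewrite flip_rel_part.
apply: rel_part_ext => u v /=.
have E w : gam_label (s p) (s q) (lmap s (flipT (lmap s (flipT w)))) = s (gam_label p q w).
  by case: w => [x|y] //=; rewrite /fuse (inj_eq perm_inj); case: ifP.
by rewrite !E (inj_eq perm_inj).
Qed.

Lemma gamma12_gam (i0 i1 : 'I_n) : i0 = 0 :> nat -> i1 = 1 :> nat -> gamma12 n = gam i0 i1.
Proof.
move=> i00 i11; pose big := [set u : T | gblock u].
pose cl (u : T) := match u with
  | inl x => if x < 2 then big else [set inl x; inr x]
  | inr y => if y == 0 :> nat then big
             else if y == 1 :> nat then [set inr y] else [set inl y; inr y]
  end.
have clE u : [set v | labelrel (gam_label i0 i1) u v] = cl u.
  apply/setP => v; case: u => [x|y]; case: v => [x'|y'];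
    rewrite /cl /big /gam_label /fuse /= ?inE -?sum_eqE /= -?val_eqE /= ?i00 ?i11;
    repeat case: ifP => ?; rewrite ?inE -?sum_eqE /= -?val_eqE /=; lia.
apply/setP => B; rewrite /gam; apply/idP/imsetP.
  rewrite !inE => /orP [/orP [/eqP -> | /imsetP [x /[!inE] x1 ->]] | /imsetP [t /[!inE] t2 ->]].
  - by exists (inr i0); rewrite // clE /= i00.
  - by exists (inr x); rewrite // clE /= (eqP x1).
  - by exists (inl t); rewrite // clE /= ltnNge t2.
case=> u _ ->; rewrite clE !inE; case: u => [x|y] /=.
  case: ifPn => x2; first by rewrite eqxx.
  by apply/orP; right; apply/imsetP; exists x; rewrite // inE leqNgt.
case: ifP => y0; first by rewrite eqxx.
case: ifP => y1; first by apply/orP; left; apply/orP; right; apply/imsetP; exists y; rewrite ?inE.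
by apply/orP; right; apply/imsetP; exists y; rewrite // inE; lia.
Qed.

Variables (p q : 'I_n).
Hypothesis pq : p != q.

Lemma fuse_neq x : fuse p q x != q.
Proof. by rewrite /fuse; case: (eqVneq x q). Qed.

Lemma gam_label_eq u : (gam_label p q u == q) = (u == inr q).
Proof. by case: u => [x|y] /=; rewrite ?(negbTE (fuse_neq x)). Qed.

Lemma isolated_gam u : isolated (labelrel (gam_label p q)) u = (u == inr q).
Proof.
apply/idP/eqP => [iso | ->]; last first.
  by apply/forallP => v; apply/implyP; rewrite /= eq_sym gam_label_eq.
case: u iso => [x|y] iso.
  suff: inr (fuse p q x) = inl x :> T by [].
  by apply: (isolatedP iso); rewrite /= eqxx.
case: (eqVneq y q) => [-> // | yq]; suff: inl y = inr y :> T by [].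
by apply: (isolatedP iso); rewrite /= /fuse (negbTE yq).
Qed.

Lemma isPIstar_gam : isPIstar (gam p q).
Proof.
apply: isPIstar_rel_part; first exact: labelrel_equiv.
move=> [x|y]; rewrite isolated_gam //; apply/orP.
  by right; apply/andP; split; [apply/existsP; exists x | apply/existsP; exists (fuse p q x)] => /=.
case: (eqVneq y q) => [-> | yq]; [left | right] => //.
by apply/andP; split; apply/existsP; exists y => //=; rewrite /fuse (negbTE yq).
Qed.

Lemma star_gam (r : rel T) : equivalence_rel r ->
  star (gam p q) (rel_part r) = rel_part (fun u v =>
    (u == v) || (r (lmap (fuse p q) u) (lmap (fuse p q) v) &&
                 ~~ (r (lmap (fuse p q) u) (inl q) || isolated r (lmap (fuse p q) u)))).
Proof.
move=> eqr; apply: rel_part_ext => u v.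
rewrite (starR_functional (labelrel_equiv _) eqr (h := fuse p q)) //=; last by move=> y y' /eqP.
congr (_ || (_ && ~~ (_ || _))).
apply/existsP/idP => [[y /andP [iso uy]] | uq]; last by exists q; rewrite isolated_gam eqxx.
by move: iso uy; rewrite isolated_gam => /eqP [->].
Qed.

Local Notation gam_rel := (labelrel (gam_label p q)).

(* Labels of the ~-classes of the product of [flip (gam p q)] and [gam p q]:
   [inl t] for the class of t'' (which contains q'' when t = p), [inr true]
   and [inr false] for the singleton classes of q and q'. *)
Definition flip_gam_label (w : pt3 n) : 'I_n + bool :=
  if w.1 == q then (if val w.2 == 1 then inl p else inr (val w.2 == 0)) else inl w.1.

Lemma sim_flip_gam w z :
  sim (rel_part (relpre flipT gam_rel)) (rel_part gam_rel) w z =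
  (flip_gam_label w == flip_gam_label z).
Proof.
have eqA := relpre_equiv (labelrel_equiv (gam_label p q)) flipT.
have eqB := labelrel_equiv (gam_label p q).
set lab := flip_gam_label.
pose rep w := match lab w with inl x => (x, lev1) | inr b => (q, if b then lev0 else lev2) end.
have labL u : lab (embL u) =
    if gam_label p q (flipT u) == q then inr true else inl (gam_label p q (flipT u)).
  by case: u => x; rewrite /lab /flip_gam_label /= ?(negbTE (fuse_neq x)) /fuse; case: eqP.
have labR u : lab (embR u) =
    if gam_label p q u == q then inr false else inl (gam_label p q u).
  by case: u => x; rewrite /lab /flip_gam_label /= ?(negbTE (fuse_neq x)) /fuse; case: eqP.
apply: (@sim_char _ _ _ eqA eqB _ eq_op lab rep (@eq_op_equiv _)) => {w z}
  [u v | u v | [x l] | w z /eqP].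
- by rewrite !labL /= => /eqP ->.
- by rewrite !labR /= => /eqP ->.
- rewrite /rep /lab /flip_gam_label /=.
  case: (eqVneq x q) => [-> | xq]; case: (lev_cases l) => -> /=; try exact: sim_refl.
  + by apply: (simL _ eqA (u := inr q) (v := inr p)); rewrite /= /fuse eqxx eq_sym (negbTE pq).
  + by apply: (simL _ eqA (u := inl x) (v := inr x)); rewrite /= /fuse (negbTE xq).
  + by apply: (simR _ eqB (u := inr x) (v := inl x)); rewrite /= /fuse (negbTE xq).
- by rewrite /rep => ->; exact: sim_refl.
Qed.

Lemma star_flip_gam :
  star (flip (gam p q)) (gam p q) =
  rel_part (pinj_rel (fun x => if x == q then None else Some x)).
Proof.
rewrite /gam flip_rel_part.
have eqA := relpre_equiv (labelrel_equiv (gam_label p q)) flipT.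
have eqB := labelrel_equiv (gam_label p q).
have labL : flip_gam_label (embL (inl q)) = inr true by rewrite /flip_gam_label /= eqxx.
have labR : flip_gam_label (embR (inr q)) = inr false by rewrite /flip_gam_label /= eqxx.
have badL w : [exists v, isolated (relpre flipT gam_rel) v &&
    sim (rel_part (relpre flipT gam_rel)) (rel_part gam_rel) w (embL v)] =
    (flip_gam_label w == inr true).
  apply/existsP/idP => [[v /andP []] | wq].
    by rewrite sim_flip_gam isolated_flip isolated_gam; case: v => x /eqP // [->]; rewrite labL.
  by exists (inl q); rewrite sim_flip_gam isolated_flip isolated_gam labL eqxx.
have badR w : [exists v, isolated gam_rel v &&
    sim (rel_part (relpre flipT gam_rel)) (rel_part gam_rel) w (embR v)] =
    (flip_gam_label w == inr false).
  apply/existsP/idP => [[v /andP []] | wq].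
    by rewrite sim_flip_gam isolated_gam => /eqP ->; rewrite labR.
  by exists (inr q); rewrite sim_flip_gam isolated_gam labR !eqxx.
apply: rel_part_ext => u v; rewrite /starR sim_flip_gam (badclassE eqA eqB) badL badR.
case: u v => [x|x] [y|y]; rewrite /flip_gam_label /= -?sum_eqE /=;
  case: (eqVneq x q) => [? | xq]; case: (eqVneq y q) => [? | yq]; subst;
  by rewrite /= ?andbF ?orbF ?(inj_eq Some_inj) ?andbT ?orbb ?(negbTE xq) ?(negbTE yq) // eq_sym.
Qed.

Lemma star_gam_pinj (g : 'I_n -> option 'I_n) : pinjective g -> g p = None ->
  star (gam p q) (rel_part (pinj_rel g)) =
  rel_part (pinj_rel (fun x => if x == q then None else g x)).
Proof.
move=> injg gp; rewrite star_gam; last exact: pinj_rel_equiv.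
have fuse_id x : x != q -> fuse p q x = x by rewrite /fuse => /negbTE ->.
apply: rel_part_ext => -[x|y] v /=.
  rewrite (negbTE (fuse_neq x)) isolated_pinj_inl /=.
  case: (eqVneq x q) => [-> | xq].
    by rewrite /fuse eqxx gp andbF orbF; case: v.
  rewrite fuse_id //; case gx: (g x) => [y|] /=; last by rewrite andbF orbF; case: v.
  rewrite andbT; case: v => [x'|y'] //=; rewrite -sum_eqE /=.
  case: (eqVneq x' q) => [-> | x'q]; last by rewrite fuse_id // orbb.
  rewrite /fuse eqxx (negbTE xq); apply/negbTE/eqP => xp.
  by rewrite xp gp in gx.
rewrite isolated_pinj_inr; case: v => [x'|y'] /=; last by rewrite -sum_eqE /=; case: (y == y').
case: (eqVneq x' q) => [-> | x'q]; first by rewrite /fuse eqxx gp.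
rewrite fuse_id //; case gx': (g x' == Some y) => //=; apply/norP; split.
  by apply/eqP => gq; move/eqP: gx' => /injg /(_ gq) x'_q; rewrite x'_q eqxx in x'q.
by apply/negP => /forallP /(_ x'); rewrite gx'.
Qed.

End Gam.

(** * Generation *)

Section Isolate.
Variable n : nat.
Local Notation T := (pt n).
Variables (R : rel T) (w0 : T).
Hypothesis eqR : equivalence_rel R.

Definition isolate : rel T := fun u v => (u == v) || [&& u != w0, v != w0 & R u v].

Definition nonisolated (r : rel T) : {set T} := [set u | ~~ isolated r u].

Lemma isolate_ne u v : u != w0 -> isolate u v = (v != w0) && R u v.
Proof.
move=> uw0; rewrite /isolate uw0 /=; case: eqP => [<- | _] //=.
by rewrite uw0 eqv_refl.
Qed.

Lemma isolate_equiv : equivalence_rel isolate.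
Proof.
move=> x y z; split; first by rewrite /isolate eqxx.
case/orP => [/eqP -> // | /and3P [xw0 yw0 Rxy]].
by rewrite !isolate_ne //; case: (eqR x y z) => _ /(_ Rxy) ->.
Qed.

Lemma isolated_isolate_w0 : isolated isolate w0.
Proof. by apply/forallP => v; apply/implyP; rewrite /isolate eqxx /= => /orP [/eqP -> |]. Qed.

Hypothesis w0_line :
  (exists x, inl x != w0 /\ R w0 (inl x)) /\ (exists y, inr y != w0 /\ R w0 (inr y)).

Lemma isolated_isolate w : w != w0 -> isolated isolate w = isolated R w.
Proof.
move=> ww0; apply/idP/idP => iso; last first.
  by apply/forallP => v; apply/implyP; rewrite isolate_ne // => /andP [_ /(isolatedP iso) ->].
apply/forallP => v; apply/implyP => Rwv.
case: (eqVneq v w0) => [vw0 | vw0]; last by apply/eqP/(isolatedP iso); rewrite isolate_ne // vw0.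
case: w0_line => [[x [xw0 Rx]] [y [yw0 Ry]]]; rewrite {}vw0 in Rwv.
have ex : inl x = w by apply: (isolatedP iso); rewrite isolate_ne // xw0 (eqv_trans eqR Rwv Rx).
have ey : inr y = w by apply: (isolatedP iso); rewrite isolate_ne // yw0 (eqv_trans eqR Rwv Ry).
by rewrite -ey in ex.
Qed.

Lemma isolate_PIstar : PIstar_rel R -> PIstar_rel isolate.
Proof.
move=> PIR w; case: (eqVneq w w0) => [-> | ww0]; first by rewrite isolated_isolate_w0.
rewrite isolated_isolate //; case/orP: (PIR w) => [-> // | /andP [/existsP [x Rx] /existsP [y Ry]]].
case: w0_line => [[x' [x'w0 Rx']] [y' [y'w0 Ry']]].
apply/orP; right; apply/andP; split; apply/existsP.
- case: (eqVneq (inl x : T) w0) => [E | xw0]; last by exists x; rewrite isolate_ne // xw0.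
  by exists x'; rewrite isolate_ne // x'w0 /=; apply: (eqv_trans eqR Rx); rewrite E.
- case: (eqVneq (inr y : T) w0) => [E | yw0]; last by exists y; rewrite isolate_ne // yw0.
  by exists y'; rewrite isolate_ne // y'w0 /=; apply: (eqv_trans eqR Ry); rewrite E.
Qed.

Lemma card_nonisolated_isolate : #|nonisolated isolate| < #|nonisolated R|.
Proof.
have -> : nonisolated isolate = nonisolated R :\ w0.
  apply/setP => w; rewrite !inE; case: (eqVneq w w0) => [-> | ww0] /=.
    by rewrite isolated_isolate_w0.
  by rewrite isolated_isolate.
rewrite (cardsD1 w0 (nonisolated R)) inE.
case: w0_line => [[x [xw0 Rx]] _]; rewrite (isolatedPn Rx xw0).
by rewrite add1n ltnS.
Qed.

End Isolate.

Lemma card_nonisolated_flip (n : nat) (R : rel (pt n)) :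
  #|nonisolated (relpre flipT R)| = #|nonisolated R|.
Proof.
rewrite -[RHS](card_preimset _ (@flipT_inj n)); apply: eq_card => u.
by rewrite !inE isolated_flip.
Qed.

Section Merge.
Variable n : nat.
Local Notation T := (pt n).
Variables (R : rel T) (p q : 'I_n).
Hypotheses (eqR : equivalence_rel R) (PIR : PIstar_rel R).
Hypotheses (pq : p != q) (Rpq : R (inl p) (inl q)).

Lemma inl_q_line : (exists x, inl x != inl q :> T /\ R (inl q) (inl x)) /\
               (exists y, inr y != inl q :> T /\ R (inl q) (inr y)).
Proof.
have Rqp := eqv_sym eqR Rpq.
split; first by exists p; split => //; apply: contra pq => /eqP [->].
case/orP: (PIR (inl q)) => [iq | /andP [_ /existsP [y Ry]]]; last by exists y.
by move: (isolatedP iq Rqp) pq => [->]; rewrite eqxx.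
Qed.

Lemma star_gam_isolate : star (gam p q) (rel_part (isolate R (inl q))) = rel_part R.
Proof.
rewrite star_gam //; last exact: isolate_equiv.
apply: rel_part_ext => u v; set g := lmap (fuse p q).
have gq w : g w != inl q by rewrite /g; case: w => [x|y] //; rewrite /= -sum_eqE /= (fuse_neq pq).
have Rg w : R w (g w).
  rewrite /g; case: w => [x|y] /=; last exact: (eqv_refl eqR _).
  by rewrite /fuse; case: eqP => [-> | _]; [exact: (eqv_sym eqR Rpq) | exact: (eqv_refl eqR _)].
rewrite !isolate_ne // (gq v) eqxx /= (isolated_isolate eqR inl_q_line) //.
rewrite -(eqv_congr eqR (Rg u) (Rg v)).
apply: eq_orb_nonisolatedE => // [-> // | iso Rguv].
have gu_u := isolatedP iso (eqv_sym eqR (Rg u)).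
have gu_v := isolatedP iso (eqv_trans eqR Rguv (eqv_sym eqR (Rg v))).
exact: etrans gu_u (esym gu_v).
Qed.

End Merge.

Section NoMerge.
Variable n : nat.
Local Notation T := (pt n).
Variable R : rel T.
Hypothesis eqR : equivalence_rel R.
Hypothesis R_ll : forall x x', R (inl x) (inl x') -> x = x'.
Hypothesis R_rr : forall y y', R (inr y) (inr y') -> y = y'.

Definition partner x : option 'I_n := [pick y | R (inl x) (inr y)].

Lemma pinjective_partner : pinjective partner.
Proof.
move=> x x' y; rewrite /partner; case: pickP => // y1 Rx [<-]; case: pickP => // y2 Rx' [E].
by apply: R_ll; apply: (eqv_trans eqR Rx); rewrite -E (eqv_symE eqR).
Qed.

Lemma partner_lr x y : R (inl x) (inr y) = (partner x == Some y).
Proof.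
rewrite /partner; case: pickP => [y' Rxy' | none]; last by rewrite none.
apply/idP/eqP => [Rxy | [<-] //]; congr Some; apply: R_rr.
exact: (eqv_trans eqR (eqv_sym eqR Rxy') Rxy).
Qed.

Lemma rel_pinj_partner : R =2 pinj_rel partner.
Proof.
move=> [x|y] [x'|y'] /=; rewrite ?partner_lr //.
- by apply/idP/eqP => [/R_ll | ->] //; exact: (eqv_refl eqR).
- by rewrite (eqv_symE eqR) partner_lr.
- by apply/idP/eqP => [/R_rr | ->] //; exact: (eqv_refl eqR).
Qed.

End NoMerge.

Section Generation.
Variable n : nat.
Hypothesis n_gt1 : 1 < n.
Local Notation T := (pt n).
Local Notation G := (gen (@gens n)).
Implicit Types (f : 'I_n -> option 'I_n).

Let i0 : 'I_n := Ordinal (ltnW n_gt1).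
Let i1 : 'I_n := Ordinal n_gt1.

Let gamma12E : gamma12 n = gam i0 i1. Proof. exact: gamma12_gam. Qed.

Lemma gen_unitS (s : {perm 'I_n}) : G (unitS s).
Proof. by apply: gen_base; left; exists s. Qed.

Lemma gen_gam p q : p != q -> G (gam p q).
Proof.
move=> pq; have [s [sp sq]] := @perm2_exists _ p q i0 i1 pq isT.
rewrite -(gam_conj s) sp sq -gamma12E.
apply/gen_flip/gen_mul; first exact: gen_unitS.
apply/gen_flip/gen_mul; first exact: gen_unitS.
by apply: gen_base; right; left.
Qed.

Lemma gen_pinj_total f : holes f = set0 -> pinjective f -> G (rel_part (pinj_rel f)).
Proof.
move=> nohole injf; have fS x : f x = Some (odflt x (f x)).
  by case fx: (f x) => //; move/setP: nohole => /(_ x); rewrite !inE fx.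
have s_inj : injective (fun x => odflt x (f x)).
  by move=> x x' sx; apply: injf (fS x) _; rewrite fS sx.
rewrite (rel_part_ext (eq_pinj_rel (g := Some \o perm s_inj) _)) -?unitS_pinj.
  exact: gen_unitS.
by move=> x; rewrite /= permE -fS.
Qed.

Lemma gen_pinj_one_hole f x0 : holes f = [set x0] -> pinjective f -> G (rel_part (pinj_rel f)).
Proof.
move=> hole injf; have fx0 : f x0 = None by apply/eqP; have := set11 x0; rewrite -hole inE.
have [y0 missing] := pinj_not_onto injf fx0.
have fS x : x != x0 -> f x = Some (odflt y0 (f x)).
  by move=> xx0; case fx: (f x) => //; move/setP: hole => /(_ x); rewrite !inE fx (negbTE xx0).
have s_inj : injective (fun x => odflt y0 (f x)).
  move=> x x'; case: (eqVneq x x0) => [-> | xx0]; case: (eqVneq x' x0) => [-> | x'x0] //;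
    rewrite ?fx0 /= => sx.
  - by have := missing x'; rewrite fS // -sx eqxx.
  - by have := missing x; rewrite fS // sx eqxx.
  - by apply: injf (fS x xx0) _; rewrite fS // sx.
pose e y := if y == y0 then None else Some y.
have e_inj : pinjective e by move=> y y' z; rewrite /e; do 2 case: ifP => // _; move=> [<-] [].
have [p py0] : exists p : 'I_n, p != y0.
  by case: (eqVneq i0 y0) => [<- | ?]; [exists i1 | exists i0].
have -> : rel_part (pinj_rel f) = star (unitS (perm s_inj)) (star (flip (gam p y0)) (gam p y0)).
  rewrite star_flip_gam // star_unitS; last exact: pinj_rel_equiv.
  apply: rel_part_ext => u v; rewrite pinj_rel_lmap; last exact: perm_inj.
  apply: eq_pinj_rel => x; rewrite /= permE /e.
  case: (eqVneq x x0) => [-> | xx0]; first by rewrite fx0 /= eqxx.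
  by rewrite fS //=; case: eqP => // sx; have := missing x; rewrite fS // sx eqxx.
apply: gen_mul; first exact: gen_unitS.
by apply: gen_mul; [apply: gen_flip | ]; apply: gen_gam.
Qed.

Lemma gen_pinj f : pinjective f -> G (rel_part (pinj_rel f)).
Proof.
have [m] := ubnP #|holes f|; elim: m f => // m IH f hm injf.
case: (set_0Vmem (holes f)) => [nohole | [x0 hx0]]; first exact: gen_pinj_total.
case: (set_0Vmem (holes f :\ x0)) => [onehole | [q]].
  by apply: (gen_pinj_one_hole (x0 := x0)) => //; rewrite -(setD1K hx0) onehole setU0.
rewrite !inE => /andP [qx0 /eqP fq]; move: hx0; rewrite inE => /eqP fx0.
have [y0 missing] := pinj_not_onto injf fx0.
pose f' x := if x == q then Some y0 else f x.
have injf' : pinjective f'.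
  move=> x x' y; rewrite /f'; case: (eqVneq x q) => [-> [<-] | xq fx];
    case: (eqVneq x' q) => [-> // | x'q].
  - by move=> fx'; have := missing x'; rewrite fx' eqxx.
  - by move=> [yy0]; have := missing x; rewrite fx yy0 eqxx.
  - exact: injf.
have -> : rel_part (pinj_rel f) = star (gam x0 q) (rel_part (pinj_rel f')).
  rewrite star_gam_pinj //; last by rewrite /f' eq_sym (negbTE qx0).
    by apply/rel_part_ext/eq_pinj_rel => x; rewrite /f'; case: eqP => // ->.
  by rewrite eq_sym.
apply: gen_mul; first by apply: gen_gam; rewrite eq_sym.
apply: IH injf'; have -> : holes f' = holes f :\ q.
  by apply/setP => x; rewrite !inE /f'; case: (eqVneq x q).
by move: hm; rewrite (cardsD1 q) inE fq eqxx.
Qed.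

Lemma gen_PIstar_rel (R : rel T) : equivalence_rel R -> PIstar_rel R -> G (rel_part R).
Proof.
have [m] := ubnP #|nonisolated R|; elim: m R => // m IH R hm eqR PIR.
have merge R' p q : equivalence_rel R' -> PIstar_rel R' ->
    #|nonisolated R'| = #|nonisolated R| -> p != q -> R' (inl p) (inl q) -> G (rel_part R').
  move=> eqR' PIR' card_R' pq Rpq; rewrite -(star_gam_isolate eqR' PIR' pq Rpq).
  apply: gen_mul; first exact: gen_gam.
  have inl_q_line' := inl_q_line eqR' PIR' pq Rpq.
  apply: IH; [| exact: isolate_equiv | exact: isolate_PIstar].
  by apply: leq_trans (card_nonisolated_isolate eqR' inl_q_line') _; rewrite card_R' -ltnS.
case: (boolP [exists p, exists q, (p != q) && R (inl p) (inl q)]) => [|noL].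
  by case/existsP => p /existsP [q /andP [pq Rpq]]; apply: (merge R p q).
case: (boolP [exists p, exists q, (p != q) && R (inr p) (inr q)]) => [|noR].
  case/existsP => p /existsP [q /andP [pq Rpq]].
  have -> : rel_part R = flip (rel_part (relpre flipT R)).
    by rewrite flip_rel_part; apply: rel_part_ext => u v; rewrite /= !flipTK.
  apply/gen_flip/(merge _ p q) => //.
  - exact: relpre_equiv.
  - exact: PIstar_rel_flip.
  - exact: card_nonisolated_flip.
have R_ll x x' : R (inl x) (inl x') -> x = x'.
  move=> Rxx'; apply/eqP; apply: contraR noL => xx'.
  by apply/existsP; exists x; apply/existsP; exists x'; rewrite xx'.
have R_rr y y' : R (inr y) (inr y') -> y = y'.
  move=> Ryy'; apply/eqP; apply: contraR noR => yy'.
  by apply/existsP; exists y; apply/existsP; exists y'; rewrite yy'.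
rewrite (rel_part_ext (rel_pinj_partner eqR R_ll R_rr)).
exact/gen_pinj/(pinjective_partner eqR R_ll).
Qed.

Lemma isPIstar_gen a : gen (@gens n) a -> isPIstar a.
Proof.
elim=> [{}a | b c _ PIb _ PIc]; last exact: star_PIstar.
have gamma12_PIstar : isPIstar (gamma12 n) by rewrite gamma12E; exact: isPIstar_gam.
case=> [[s ->] | [-> | ->]]; [exact: isPIstar_unitS | exact: gamma12_PIstar | ].
by rewrite -flip_gamma12; exact: isPIstar_flip.
Qed.

End Generation.

Theorem mainTheorem18 (n : nat) (hn : (3 <= n)%N) (a : PIpart n) :
  isPIstar a <-> gen (@gens n) a.
Proof.
have n_gt1 : 1 < n by apply: leq_trans hn.
split; last exact: isPIstar_gen.
by case/isPIstarP => Ea eqa PIa; rewrite Ea; exact: gen_PIstar_rel.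
Qed.
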